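(* Let $M,K$ be real anti-symmetric $m\times m$ matrices, $S:\mathbb R^m\to\mathbb R$ smooth, $A$ real symmetric, and let $Q$ be an orthogonal matrix and $\Lambda$ a real $\lfloor m/2\rfloor\times\lfloor m/2\rfloor$ matrix with $$K=Q^T\begin{pmatrix}0&0&-\Lambda^T\\0&0&0\\\Lambda&0&0\end{pmatrix}Q\ (m\text{ odd}),\qquad K=Q^T\begin{pmatrix}0&-\Lambda^T\\\Lambda&0\end{pmatrix}Q\ (m\text{ even}).$$ Suppose $B=\beta M$ for some real $\beta$ and that the last $\lfloor m/2\rfloor$ columns of $MQ^T$ are zero. Let $\mathbf z_h$ be a solution of the semi-discrete DG scheme described in the context, and write $Q\mathbf z_h=(\mathbf u_h,w_h,\mathbf v_h)^T$ ($m$ odd) or $Q\mathbf z_h=(\mathbf u_h,\mathbf v_h)^T$ ($m$ even) with $\mathbf u_h,\mathbf v_h\in(V_h)^{\lfloor m/2\rfloor}$, $w_h\in V_h$. Let $\nabla_{\mathbf v}S(\mathbf z_h)$ denote the vector of the last $\lfloor m/2\rfloor$ components of $Q\nabla_{\mathbf z}S(\mathbf z_h)$, and let $$\widetilde A=Q^T\begin{pmatrix}I&0&0\\0&1&0\\0&0&-I\end{pmatrix}QA\ (m\text{ odd}),\qquad \widetilde A=Q^T\begin{pmatrix}I&0\\0&-I\end{pmatrix}QA\ (m\text{ even}).$$ Then the total energy $\mathcal E_h=\int_\Omega\big(S(\mathbf z_h)-\tfrac12K\partial_x\mathbf z_h\cdot\mathbf z_h\big)dx+\tfrac12\sum_j\big((K\{\mathbf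 z_h\}+A[\mathbf z_h])\cdot[\mathbf z_h]\big)_{j+\frac12}$ satisfies $$\mathcal E_h=\int_\Omega\big(S(\mathbf z_h)-\nabla_{\mathbf v}S(\mathbf z_h)\cdot\mathbf v_h\big)dx+\tfrac12\sum_j\big(\widetilde A[\mathbf z_h]\cdot[\mathbf z_h]\big)_{j+\frac12}.$$ In particular, if $A=\alpha Q^T\begin{pmatrix}0&0&\Lambda^T\\0&0&0\\\Lambda&0&0\end{pmatrix}Q$ ($m$ odd) or $A=\alpha Q^T\begin{pmatrix}0&\Lambda^T\\\Lambda&0\end{pmatrix}Q$ ($m$ even) with $\alpha\in[-\frac12,\frac12]$, then $\widetilde A$ is anti-symmetric and $\mathcal E_h=\int_\Omega\big(S(\mathbf z_h)-\nabla_{\mathbf v}S(\mathbf z_h)\cdot\mathbf v_h\big)dx$.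
   Context: Mesh and spaces: a one-dimensional domain $\Omega$ is partitioned into cells $I_j=[x_{j-1/2},x_{j+1/2}]$, $j=1,\dots,N$, with periodic boundary conditions (interface indices modulo $N$). For fixed $k\ge0$, $V_h=\{v\in L^2(\Omega): v|_{I_j}\text{ is a polynomial of degree}\le k\ \forall j\}$, $\mathbf V_h=(V_h)^m$. For $\mathbf v\in\mathbf V_h$, $\mathbf v^\pm_{j+1/2}$ are right/left limits at $x_{j+1/2}$, $\{\mathbf v\}=\frac12(\mathbf v^++\mathbf v^-)$, $[\mathbf v]=\mathbf v^+-\mathbf v^-$; subscript $j+\frac12$ means evaluation at $x_{j+1/2}$; $\partial_x$ is taken cellwise. The semi-discrete DG scheme: find $\mathbf z_h(t)\in\mathbf V_h$, continuously differentiable in $t$, such that for all $j$ and all $\boldsymbol\varphi\in\mathbf V_h$, $$\int_{I_j}M\partial_t\mathbf z_h\cdot\boldsymbol\varphi\,dx-\int_{I_j}K\mathbf z_h\cdot\partial_x\boldsymbol\varphi\,dx+\big(\widehat{K\mathbf z_h}\cdot\boldsymbol\varphi^-\big)_{j+\frac12}-\big(\widehat{K\mathbf z_h}\cdot\boldsymbol\varphi^+\big)_{j-\frac12}=\int_{I_j}\nabla_{\mathbf z}S(\mathbf z_h)\cdot\boldsymbol\varphi\,dx,$$ with $\widehat{K\mathbf z_h}=K\{\mathbf z_h\}+A[\mathbf z_h]+B\,\partial_t[\mathbf z_h]$ at each interface. *)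

From Stdlib Require Import Reals.
From Coquelicot Require Import Coquelicot.
From HB Require Import structures.
From mathcomp Require Import all_boot all_order all_algebra.
From mathcomp Require Import Rstruct.
Set Implicit Arguments. Unset Strict Implicit. Unset Printing Implicit Defensive.
Import GRing.Theory Num.Theory.
Local Open Scope ring_scope.

Definition dotv (m : nat) (a b : 'cV[R]_m) : R := \sum_(i < m) a i 0 * b i 0.

(* dot product of the last floor(m/2) components (the "v"-block) *)
Definition vdot (m : nat) (a b : 'cV[R]_m) : R :=
  \sum_(i < m | (m - m./2 <= i)%N) a i 0 * b i 0.

(* m = floor(m/2) + (r + floor(m/2)) with r = 1 (m odd) or 0 (m even) *)
Lemma blk_eq (m : nat) : m = (m./2 + (odd m + m./2))%N.
Proof. by rewrite addnCA addnn odd_double_half. Qed.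

Definition castm (m : nat) (X : 'M[R]_(m./2 + (odd m + m./2))) : 'M[R]_m :=
  castmx (esym (blk_eq m), esym (blk_eq m)) X.

(* [[0,0,-L^T],[0,0,0],[L,0,0]]  (middle block absent if m even) *)
Definition Kblk (m : nat) (L : 'M[R]_(m./2)) : 'M[R]_m :=
  castm (block_mx (0 : 'M[R]_(m./2, m./2))
                  (row_mx (0 : 'M[R]_(m./2, odd m)) (- L^T))
                  (col_mx (0 : 'M[R]_(odd m, m./2)) L)
                  (0 : 'M[R]_(odd m + m./2, odd m + m./2))).

(* [[0,0,L^T],[0,0,0],[L,0,0]] *)
Definition Ablk (m : nat) (L : 'M[R]_(m./2)) : 'M[R]_m :=
  castm (block_mx (0 : 'M[R]_(m./2, m./2))
                  (row_mx (0 : 'M[R]_(m./2, odd m)) L^T)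
                  (col_mx (0 : 'M[R]_(odd m, m./2)) L)
                  (0 : 'M[R]_(odd m + m./2, odd m + m./2))).

(* diag(I, 1, -I) *)
Definition Dblk (m : nat) : 'M[R]_m :=
  castm (block_mx (1%:M : 'M[R]_(m./2)) 0 0
                  (block_mx (1%:M : 'M[R]_(odd m)) 0 0 (- (1%:M : 'M[R]_(m./2))))).

Definition pdir (m : nat) (i : 'I_m) (f : 'cV[R]_m -> R) : 'cV[R]_m -> R :=
  fun y => Derive (fun s : R => f (y + s *: delta_mx i 0)) 0.

Fixpoint itpd (m : nat) (l : seq 'I_m) (f : 'cV[R]_m -> R) : 'cV[R]_m -> R :=
  match l with [::] => f | i :: l' => pdir i (itpd l' f) end.

Definition contv (m : nat) (f : 'cV[R]_m -> R) (y : 'cV[R]_m) : Prop :=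
  forall eps : R, 0 < eps -> exists2 d : R, 0 < d &
    forall y' : 'cV[R]_m, (forall i, `|y' i 0 - y i 0| < d) -> `|f y' - f y| < eps.

Definition smooth (m : nat) (f : 'cV[R]_m -> R) : Prop :=
  forall (l : seq 'I_m) (y : 'cV[R]_m), contv (itpd l f) y /\
    forall i, ex_derive (fun s : R => itpd l f (y + s *: delta_mx i 0)) 0.

Definition gradS (m : nat) (f : 'cV[R]_m -> R) (y : 'cV[R]_m) : 'cV[R]_m :=
  \col_i pdir i f y.

(* ---------- DG spaces on a periodic mesh ----------
   Cells I_j = [xs j, xs (j+1)], j = 0..N-1 (0-based); the interface
   after cell j is x = xs (j+1), identified periodically with xs 0 for j = N-1.
   An element of V_h^m is given by its monomial coefficients:
   on cell j, component i is  sum_{l<=k} c j i l * x^l. *)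
Definition field (N m k : nat) := 'I_N -> 'I_m -> 'I_k.+1 -> R.

Definition ev N m k (c : field N m k) (j : 'I_N) (x : R) : 'cV[R]_m :=
  \col_i \sum_(l < k.+1) c j i l * x ^+ l.

Definition evx N m k (c : field N m k) (j : 'I_N) (x : R) : 'cV[R]_m :=
  \col_i \sum_(l < k.+1) c j i l * ((l : nat)%:R * x ^+ (l.-1)).

(* left (v^-) and right (v^+) limits at the interface after cell j *)
Definition trm N m k (xs : nat -> R) (c : field N m k) (j : 'I_N) : 'cV[R]_m :=
  ev c j (xs j.+1).
Definition trp N m k (xs : nat -> R) (c : field N m k) (j : 'I_N) : 'cV[R]_m :=
  ev c (ordS j) (xs (ordS j)).

Definition jump N m k xs (c : field N m k) j : 'cV[R]_m := trp xs c j - trm xs c j.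
Definition avg N m k xs (c : field N m k) j : 'cV[R]_m :=
  2^-1 *: (trp xs c j + trm xs c j).

Definition dtf N m k (z : R -> field N m k) (t : R) : field N m k :=
  fun j i l => Derive (fun s : R => z s j i l) t.

Definition C1_at N m k (z : R -> field N m k) (t : R) : Prop :=
  forall j i l, ex_derive (fun s : R => z s j i l) t /\
    continuous (fun s : R => Derive (fun s' : R => z s' j i l) s) t.

Definition flux N m k xs (K A B : 'M[R]_m) (z : R -> field N m k) t j : 'cV[R]_m :=
  K *m avg xs (z t) j + A *m jump xs (z t) j + B *m jump xs (dtf z t) j.

Definition dg_scheme N m k (xs : nat -> R) (M K A B : 'M[R]_m)
    (S : 'cV[R]_m -> R) (z : R -> field N m k) (t : R) : Prop :=
  forall (j : 'I_N) (phi : field N m k),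
    RInt (fun x : R => dotv (M *m ev (dtf z t) j x) (ev phi j x)) (xs j) (xs j.+1)
    - RInt (fun x : R => dotv (K *m ev (z t) j x) (evx phi j x)) (xs j) (xs j.+1)
    + dotv (flux xs K A B z t j) (ev phi j (xs j.+1))
    - dotv (flux xs K A B z t (ord_pred j)) (ev phi j (xs j))
    = RInt (fun x : R => dotv (gradS S (ev (z t) j x)) (ev phi j x)) (xs j) (xs j.+1).

Definition energy N m k (xs : nat -> R) (K A : 'M[R]_m) (S : 'cV[R]_m -> R)
    (c : field N m k) : R :=
  \sum_(j < N) RInt (fun x : R => S (ev c j x) - 2^-1 * dotv (K *m evx c j x) (ev c j x))
                    (xs j) (xs j.+1)
  + 2^-1 * \sum_(j < N) dotv (K *m avg xs c j + A *m jump xs c j) (jump xs c j).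

Definition vintegral N m k (xs : nat -> R) (Q : 'M[R]_m) (S : 'cV[R]_m -> R)
    (c : field N m k) : R :=
  \sum_(j < N) RInt (fun x : R => S (ev c j x)
                    - vdot (Q *m gradS S (ev c j x)) (Q *m ev c j x)) (xs j) (xs j.+1).

Definition jumpterm N m k (xs : nat -> R) (At : 'M[R]_m) (c : field N m k) : R :=
  2^-1 * \sum_(j < N) dotv (At *m jump xs c j) (jump xs c j).

(* Let G := Q^T diag(I, 1, -I) Q. It is a symmetric reflection that anticommutes
   with K, so H := K G is symmetric, and P := (1 - G)/2 = Q^T diag(0, 0, I) Q is
   the projection onto the v-components. Test the scheme on each cell with P z_h.
   Since M P = 0 and B = beta M, the time-derivative term and the B-part of the
   flux drop out. The volume term K z_h . P d_x z_h + 1/2 K d_x z_h . z_h equals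
   1/4 d_x (H z_h . z_h), so it integrates to boundary values. Summing over the
   periodic mesh, these boundary values telescope, and at each interface they
   combine with the fluxes and the jump term of the energy into 1/2 G A [z_h].[z_h].
   For A = alpha Q^T (..) Q one gets G A = - alpha K, which is skew, so the jump
   term vanishes. *)

From Stdlib Require Import Reals FunctionalExtensionality.
From Coquelicot Require Import Coquelicot.
From mathcomp Require Import all_boot all_order all_algebra.
From mathcomp Require Import Rstruct.
From mathcomp Require Import ring lra zify.
Set Implicit Arguments. Unset Strict Implicit. Unset Printing Implicit Defensive.
Import GRing.Theory.
Local Open Scope ring_scope.

Section DotProduct.
Variable m : nat.
Implicit Types (a b c : 'cV[R]_m) (X : 'M[R]_m).

Lemma dotvE a b : dotv a b = (a^T *m b) 0 0.
Proof. by rewrite /dotv mxE; apply: eq_bigr => i _; rewrite mxE. Qed.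

Lemma dotvC a b : dotv a b = dotv b a.
Proof. by apply: eq_bigr => i _; rewrite mulrC. Qed.

Lemma dotvDl a b c : dotv (a + b) c = dotv a c + dotv b c.
Proof. by rewrite /dotv -big_split; apply: eq_bigr => i _; rewrite mxE mulrDl. Qed.

Lemma dotvZl r a b : dotv (r *: a) b = r * dotv a b.
Proof. by rewrite /dotv mulr_sumr; apply: eq_bigr => i _; rewrite mxE mulrA. Qed.

Lemma dotvZr r a b : dotv a (r *: b) = r * dotv a b.
Proof. by rewrite dotvC dotvZl dotvC. Qed.

Lemma dotvNl a b : dotv (- a) b = - dotv a b.
Proof. by rewrite -scaleN1r dotvZl mulN1r. Qed.

Lemma dotvNr a b : dotv a (- b) = - dotv a b.
Proof. by rewrite dotvC dotvNl dotvC. Qed.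

Lemma dotvBl a b c : dotv (a - b) c = dotv a c - dotv b c.
Proof. by rewrite dotvDl dotvNl. Qed.

Lemma dotvBr a b c : dotv a (b - c) = dotv a b - dotv a c.
Proof. by rewrite !(dotvC a) dotvBl. Qed.

Lemma dotv0l a : dotv 0 a = 0.
Proof. by apply: big1 => i _; rewrite mxE mul0r. Qed.

Lemma dotv_mulmxl X a b : dotv (X *m a) b = dotv a (X^T *m b).
Proof. by rewrite !dotvE trmx_mul mulmxA. Qed.

Lemma dotv_mulmxr X a b : dotv a (X *m b) = dotv (X^T *m a) b.
Proof. by rewrite dotv_mulmxl trmxK. Qed.

Lemma dotv_skew X a : X^T = - X -> dotv (X *m a) a = 0.
Proof.
move=> skewX; have opp_self : dotv (X *m a) a = - dotv (X *m a) a.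
  by rewrite {1}dotv_mulmxl skewX mulNmx dotvC -dotvNl.
lra.
Qed.

End DotProduct.

Definition vproj (m : nat) (G : 'M[R]_m) : 'M[R]_m := 2^-1 *: (1%:M - G).

Section ReflectionSplitting.
Variables (m : nat) (K G : 'M[R]_m).
Hypotheses (skewK : K^T = - K) (symG : G^T = G) (anticomGK : G *m K = - (K *m G)).
Implicit Types a b : 'cV[R]_m.

Lemma vprojE a : vproj G *m a = 2^-1 *: (a - G *m a).
Proof. by rewrite -scalemxAl mulmxBl mul1mx. Qed.

Lemma trmx_vproj : (vproj G)^T = vproj G.
Proof. by rewrite /vproj linearZ /= linearB /= trmx1 symG. Qed.

Lemma trmx_KG : (K *m G)^T = K *m G.
Proof. by rewrite trmx_mul symG skewK mulmxN anticomGK opprK. Qed.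

Lemma dotv_KG_sym a b : dotv (K *m G *m a) b = dotv (K *m G *m b) a.
Proof. by rewrite dotv_mulmxl trmx_KG dotvC. Qed.

Lemma dotv_K_vproj a b :
  dotv (K *m a) (vproj G *m b) + 2^-1 * dotv (K *m b) a
  = 4^-1 * (dotv (K *m G *m b) a + dotv (K *m G *m a) b).
Proof.
have skew_ab : dotv (K *m a) b = - dotv (K *m b) a.
  by rewrite dotv_mulmxl skewK mulNmx dotvC dotvNl.
have KG_ab : dotv (K *m a) (G *m b) = - dotv (K *m G *m a) b.
  by rewrite dotv_mulmxr symG mulmxA anticomGK mulNmx dotvNl.
by rewrite vprojE dotvZr dotvBr skew_ab KG_ab (dotv_KG_sym b); field.
Qed.

Lemma interface_balance (A : 'M[R]_m) (zp zm r : 'cV[R]_m) :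
  dotv r (vproj G *m (zp - zm)) = 0 ->
  let F := K *m (2^-1 *: (zp + zm)) + A *m (zp - zm) in
  let trace_term v := dotv (F + r) (vproj G *m v) - 4^-1 * dotv (K *m G *m v) v in
  trace_term zm - trace_term zp + 2^-1 * dotv F (zp - zm)
  = 2^-1 * dotv (G *m A *m (zp - zm)) (zp - zm).
Proof.
move=> r_perp F trace_term; set w := zp - zm in r_perp *.
have FP : dotv (F + r) (vproj G *m zm) - dotv (F + r) (vproj G *m zp)
          = - dotv F (vproj G *m w).
  by rewrite -dotvBr -mulmxBr -opprB mulmxN dotvNr dotvDl r_perp addr0.
have KG_avg : dotv (K *m (2^-1 *: (zp + zm))) (G *m w)
              = - 2^-1 * (dotv (K *m G *m zp) zp - dotv (K *m G *m zm) zm).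
  rewrite dotv_mulmxr symG mulmxA anticomGK mulNmx dotvNl -scalemxAr dotvZl.
  by rewrite mulmxDr dotvDl /w !dotvBr (dotv_KG_sym zp zm); lra.
have FG : dotv F (G *m w) = - 2^-1 * (dotv (K *m G *m zp) zp - dotv (K *m G *m zm) zm)
                            + dotv (G *m A *m w) w.
  by rewrite dotvDl KG_avg dotv_mulmxr symG mulmxA.
move: FP; rewrite /trace_term (vprojE w) dotvZr dotvBr FG; lra.
Qed.

End ReflectionSplitting.

Lemma castmx_mulmx n n' (e : n = n') (X Y : 'M[R]_n) :
  castmx (e, e) (X *m Y) = castmx (e, e) X *m castmx (e, e) Y.
Proof. by case: n' / e; rewrite !castmx_id. Qed.

Lemma castmx_opp n n' (e : n = n') (X : 'M[R]_n) :
  castmx (e, e) (- X) = - castmx (e, e) X.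
Proof. by case: n' / e; rewrite !castmx_id. Qed.

Section BlockMatrices.
Variables (m : nat) (L : 'M[R]_(m./2)).

Lemma trmx_Dblk : (Dblk m)^T = Dblk m.
Proof.
by rewrite /Dblk /castm trmx_cast /= !tr_block_mx !trmx0 !trmx1 linearN /= trmx1.
Qed.

Lemma Kblk_Dblk : Kblk L *m Dblk m = Ablk L.
Proof.
rewrite /Kblk /Dblk /Ablk /castm -castmx_mulmx mulmx_block mul_row_block.
by rewrite !(mul0mx, mulmx0, addr0, add0r, mulmx1, mulmxN, mulNmx, opprK).
Qed.

Lemma Dblk_Kblk : Dblk m *m Kblk L = - Ablk L.
Proof.
rewrite /Kblk /Dblk /Ablk /castm -castmx_opp -castmx_mulmx mulmx_block mul_block_col.
by rewrite !(mul0mx, mulmx0, addr0, add0r, mul1mx, mulNmx, opp_block_mx, opp_row_mx,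
             opp_col_mx, oppr0).
Qed.

Lemma Dblk_Ablk : Dblk m *m Ablk L = - Kblk L.
Proof.
rewrite /Kblk /Dblk /Ablk /castm -castmx_opp -castmx_mulmx mulmx_block mul_block_col.
by rewrite !(mul0mx, mulmx0, addr0, add0r, mul1mx, mulNmx, opp_block_mx, opp_row_mx,
             opp_col_mx, oppr0, opprK).
Qed.

End BlockMatrices.

Lemma block_sign_diagE p o (i j : 'I_(p + (o + p))) :
  block_mx (1%:M : 'M[R]_p) 0 0 (block_mx (1%:M : 'M[R]_o) 0 0 (- 1%:M)) i j
  = if i == j then (if (p + o <= i)%N then -1 else 1) else 0.
Proof.
have eq_ord n (a b : 'I_n) : (a == b) = (a == b :> nat) by [].
rewrite mxE; case: (splitP i) => i1 hi; rewrite mxE; case: (splitP j) => j1 hj.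
4: rewrite mxE; case: (splitP i1) => i2 hi2; rewrite mxE; case: (splitP j1) => j2 hj2.
4-7: move: (ltn_ord i2) (ltn_ord j2) => ? ?.
all: move: (ltn_ord i1) (ltn_ord j1) => ? ?; rewrite ?mxE !eq_ord ?hi ?hj.
all: repeat (case: eqP => /= ?); repeat (case: leqP => /= ?).
all: rewrite ?mulr1n ?mulr0n ?oppr0 //; lia.
Qed.

Lemma Dblk_E m (i j : 'I_m) :
  Dblk m i j = if i == j then (if (m - m./2 <= i)%N then -1 else 1) else 0.
Proof.
have -> : (m - m./2 = m./2 + odd m)%N by have := blk_eq m; lia.
by rewrite /Dblk /castm castmxE block_sign_diagE.
Qed.

Lemma vproj_DblkE m (i j : 'I_m) :
  vproj (Dblk m) i j = ((i == j) && (m - m./2 <= i)%N)%:R.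
Proof.
rewrite !mxE Dblk_E; case: eqP => _ /=; last by rewrite mulr0n subrr mulr0.
by case: leqP => _; rewrite ?mulr1n ?mulr0n; field.
Qed.

Lemma dotv_vproj_Dblk m (a b : 'cV[R]_m) : dotv a (vproj (Dblk m) *m b) = vdot a b.
Proof.
rewrite /dotv /vdot [RHS]big_mkcond; apply: eq_bigr => i _.
rewrite mxE (bigD1 i) //= vproj_DblkE eqxx big1 ?addr0 => [|l /negPf neq_li].
  by case: leqP => _; rewrite ?mul1r ?mul0r ?mulr0.
by rewrite vproj_DblkE eq_sym neq_li mul0r.
Qed.

Lemma mulmx_vproj_Dblk m (X : 'M[R]_m) :
  (forall i j : 'I_m, (m - m./2 <= j)%N -> X i j = 0) -> X *m vproj (Dblk m) = 0.
Proof.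
move=> X_v0; apply/matrixP => i j; rewrite !mxE (bigD1 j) //= vproj_DblkE eqxx /=.
rewrite big1 => [|l /negPf neq_lj]; last by rewrite vproj_DblkE neq_lj mulr0.
by case: leqP => [/X_v0 ->|_]; rewrite ?mul0r ?mulr0 addr0.
Qed.

Section OrthogonalConjugation.
Variables (m : nat) (Q : 'M[R]_m).
Hypothesis orthoQ : Q^T *m Q = 1%:M.
Implicit Types X Y : 'M[R]_m.

Lemma mulmx_conj X Y : (Q^T *m X *m Q) *m (Q^T *m Y *m Q) = Q^T *m (X *m Y) *m Q.
Proof. by rewrite !mulmxA -(mulmxA _ Q) (mulmx1C orthoQ) mulmx1. Qed.

Lemma trmx_conj X : (Q^T *m X *m Q)^T = Q^T *m X^T *m Q.
Proof. by rewrite !trmx_mul trmxK mulmxA. Qed.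

Lemma vproj_conj X : vproj (Q^T *m X *m Q) = Q^T *m vproj X *m Q.
Proof. by rewrite /vproj -scalemxAr -scalemxAl mulmxBr mulmxBl mulmx1 orthoQ. Qed.

End OrthogonalConjugation.

Lemma continuous_sum n (F : 'I_n -> R -> R) x :
  (forall l, continuous (F l) x) -> continuous (fun s => \sum_(l < n) F l s) x.
Proof.
elim: n F => [|n IHn] F contF.
  apply: (continuous_ext (fun _ : R => 0 : R)) => [s|]; first by rewrite big_ord0.
  exact: continuous_const.
apply: (continuous_ext (fun s : R => \sum_(l < n) F (widen_ord (leqnSn n) l) s + F ord_max s)).
  by move=> s; rewrite big_ord_recr.
by apply: continuous_plus; [apply: IHn | apply: contF].
Qed.

Lemma is_derive_sum n (F dF : 'I_n -> R -> R) x :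
  (forall l, is_derive (F l) x (dF l x)) ->
  is_derive (fun s => \sum_(l < n) F l s) x (\sum_(l < n) dF l x).
Proof.
elim: n F dF => [|n IHn] F dF derF.
  rewrite big_ord0; apply: (is_derive_ext (fun _ : R => 0 : R)) => [s|].
    by rewrite big_ord0.
  exact: is_derive_const.
apply: (is_derive_ext (fun s : R => \sum_(l < n) F (widen_ord (leqnSn n) l) s + F ord_max s)).
  by move=> s; rewrite big_ord_recr.
rewrite big_ord_recr; apply: is_derive_plus; last exact: derF.
exact: (IHn (fun l => F (widen_ord _ l)) (fun l => dF (widen_ord _ l))).
Qed.

Lemma is_derive_exprn (n : nat) x : is_derive (fun s : R => s ^+ n) x (n%:R * x ^+ n.-1).
Proof.
apply: (is_derive_ext (fun s : R => pow s n)) => [s|]; first by rewrite RpowE.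
have := is_derive_pow (fun s => s) n x 1 (is_derive_id x).
by rewrite Rmult_1_r -INRE -RpowE.
Qed.

Definition cV_continuous m (y : R -> 'cV[R]_m) x :=
  forall i, continuous (fun s => y s i 0) x.

Definition cV_is_derive m (y : R -> 'cV[R]_m) x (dy : 'cV[R]_m) :=
  forall i, is_derive (fun s => y s i 0) x (dy i 0).

Lemma cV_is_derive_continuous m (y : R -> 'cV[R]_m) x dy :
  cV_is_derive y x dy -> cV_continuous y x.
Proof. by move=> dery i; apply: ex_derive_continuous; exists (dy i 0). Qed.

Lemma ev_is_derive N m k (c : field N m k) j x : cV_is_derive (ev c j) x (evx c j x).
Proof.
move=> i; apply: (is_derive_ext (fun s : R => \sum_(l < k.+1) c j i l * s ^+ l)).
  by move=> s; rewrite mxE.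
rewrite mxE; apply: (@is_derive_sum _ (fun l (s : R) => c j i l * s ^+ l)
  (fun l s => c j i l * ((l : nat)%:R * s ^+ l.-1)) x) => l.
by apply: is_derive_scal; exact: is_derive_exprn.
Qed.

Lemma ev_continuous N m k (c : field N m k) j x : cV_continuous (ev c j) x.
Proof. exact: cV_is_derive_continuous (ev_is_derive c j x). Qed.

Lemma evx_continuous N m k (c : field N m k) j x : cV_continuous (evx c j) x.
Proof.
move=> i.
apply: (continuous_ext (fun s : R => \sum_(l < k.+1) c j i l * ((l : nat)%:R * s ^+ l.-1))).
  by move=> s; rewrite mxE.
apply: continuous_sum => l; apply: continuous_mult; first exact: continuous_const.
apply: continuous_mult; first exact: continuous_const.
by apply: ex_derive_continuous; eexists; exact: is_derive_exprn.
Qed.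

Lemma mulmx_continuous m (X : 'M[R]_m) y x :
  cV_continuous y x -> cV_continuous (fun s => X *m y s) x.
Proof.
move=> conty i; apply: (continuous_ext (fun s : R => \sum_(l < m) X i l * y s l 0)).
  by move=> s; rewrite mxE.
apply: continuous_sum => l; apply: continuous_mult; [exact: continuous_const | exact: conty].
Qed.

Lemma mulmx_is_derive m (X : 'M[R]_m) y x dy :
  cV_is_derive y x dy -> cV_is_derive (fun s => X *m y s) x (X *m dy).
Proof.
move=> dery i; apply: (is_derive_ext (fun s : R => \sum_(l < m) X i l * y s l 0)).
  by move=> s; rewrite mxE.
rewrite mxE; apply: (@is_derive_sum _ (fun l (s : R) => X i l * y s l 0)
  (fun l _ => X i l * dy l 0) x) => l.
by apply: is_derive_scal; exact: dery.
Qed.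

Lemma dotv_continuous m (y1 y2 : R -> 'cV[R]_m) x :
  cV_continuous y1 x -> cV_continuous y2 x -> continuous (fun s => dotv (y1 s) (y2 s)) x.
Proof.
move=> cont1 cont2; apply: continuous_sum => l.
by apply: continuous_mult; [exact: cont1 | exact: cont2].
Qed.

Lemma dotv_is_derive m (y1 y2 : R -> 'cV[R]_m) x dy1 dy2 :
  cV_is_derive y1 x dy1 -> cV_is_derive y2 x dy2 ->
  is_derive (fun s => dotv (y1 s) (y2 s)) x (dotv dy1 (y2 x) + dotv (y1 x) dy2).
Proof.
move=> der1 der2; rewrite /dotv -big_split /=.
apply: (@is_derive_sum _ (fun l (s : R) => y1 s l 0 * y2 s l 0)
  (fun l s => dy1 l 0 * y2 s l 0 + y1 s l 0 * dy2 l 0) x) => l.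
apply: is_derive_mult; [exact: der1 | exact: der2 | by move=> a b; exact: Rmult_comm].
Qed.

Lemma contv_comp_continuous m (f : 'cV[R]_m -> R) y x :
  contv f (y x) -> cV_continuous y x -> continuous (fun s => f (y s)) x.
Proof.
move=> contf conty; apply/filterlim_locally => eps.
have eps_gt0 : 0 < (eps : R) by apply/RltP; exact: cond_pos.
have [d d_gt0 near_f] := contf eps eps_gt0.
suff near_y : locally x (fun s => forall i, i \in enum 'I_m -> `|y s i 0 - y x i 0| < d).
  apply: filter_imp near_y => s near_ys.
  change (Rlt (Rabs (Rminus (f (y s)) (f (y x)))) eps); rewrite RabsE RminusE; apply/RltP.
  by apply: near_f => i; apply: near_ys; rewrite mem_enum.
elim: (enum 'I_m) => [|i l IHl]; first exact: filter_forall.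
have near_yi : locally x (fun s => `|y s i 0 - y x i 0| < d).
  have d_pos : Rlt 0 d by apply/RltP.
  move/filterlim_locally: (conty i) => /(_ (mkposreal d d_pos)).
  apply: filter_imp => s near_si.
  have : Rlt (Rabs (Rminus (y s i 0) (y x i 0))) d := near_si.
  by rewrite RabsE RminusE => /RltP.
apply: filter_imp (filter_and _ _ near_yi IHl) => s [near_si near_sl] i'.
by rewrite inE => /orP [/eqP -> | /near_sl].
Qed.

Lemma smooth_comp_continuous m (S : 'cV[R]_m -> R) y x :
  smooth S -> cV_continuous y x -> continuous (fun s => S (y s)) x.
Proof. by move=> smoothS; apply: contv_comp_continuous; exact: (proj1 (smoothS [::] _)). Qed.

Lemma gradS_comp_continuous m (S : 'cV[R]_m -> R) y x :
  smooth S -> cV_continuous y x -> cV_continuous (fun s => gradS S (y s)) x.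
Proof.
move=> smoothS conty i; apply: (continuous_ext (fun s : R => pdir i S (y s))).
  by move=> s; rewrite mxE.
by apply: contv_comp_continuous => //; exact: (proj1 (smoothS [:: i] _)).
Qed.

Lemma RInt_add_continuous (f g : R -> R) a b :
  (forall x, continuous f x) -> (forall x, continuous g x) ->
  RInt (fun x => f x + g x) a b = RInt f a b + RInt g a b.
Proof.
move=> contf contg; apply: RInt_plus.
  by apply: ex_RInt_continuous => x _; exact: contf.
by apply: ex_RInt_continuous => x _; exact: contg.
Qed.

Lemma RInt_sub_continuous (f g : R -> R) a b :
  (forall x, continuous f x) -> (forall x, continuous g x) ->
  RInt (fun x => f x - g x) a b = RInt f a b - RInt g a b.
Proof.
move=> contf contg; apply: RInt_minus.
  by apply: ex_RInt_continuous => x _; exact: contf.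
by apply: ex_RInt_continuous => x _; exact: contg.
Qed.

Lemma RInt_is_derive (f g : R -> R) a b :
  (forall x, continuous f x) -> (forall x, is_derive g x (f x)) ->
  RInt f a b = g b - g a.
Proof.
move=> contf derg; apply: is_RInt_unique.
exact: (is_RInt_derive g f a b (fun x _ => derg x) (fun x _ => contf x)).
Qed.

Lemma RInt_eq0 (f : R -> R) a b : (forall x, f x = 0) -> RInt f a b = 0.
Proof.
move=> f0; rewrite (RInt_ext f (fun _ => 0)) => [|x _]; last exact: f0.
by rewrite RInt_const scal_zero_r.
Qed.

Definition mul_field N m k (X : 'M[R]_m) (c : field N m k) : field N m k :=
  fun j i l => \sum_(i' < m) X i i' * c j i' l.

Lemma mulmx_col_poly m n (X : 'M[R]_m) (c : 'I_m -> 'I_n -> R) (w : 'I_n -> R) :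
  \col_i (\sum_(l < n) (\sum_(i' < m) X i i' * c i' l) * w l)
  = X *m \col_i (\sum_(l < n) c i l * w l).
Proof.
apply/matrixP => i j; rewrite !mxE.
under eq_bigr do rewrite big_distrl /=.
rewrite exchange_big /=; apply: eq_bigr => i' _.
by rewrite mxE big_distrr /=; apply: eq_bigr => l _; rewrite mulrA.
Qed.

Lemma ev_mul_field N m k (X : 'M[R]_m) (c : field N m k) j :
  ev (mul_field X c) j = fun x => X *m ev c j x.
Proof. by apply: functional_extensionality => x; exact: mulmx_col_poly. Qed.

Lemma evx_mul_field N m k (X : 'M[R]_m) (c : field N m k) j :
  evx (mul_field X c) j = fun x => X *m evx c j x.
Proof. by apply: functional_extensionality => x; exact: mulmx_col_poly. Qed.

Lemma trp_ord_pred N m k xs (c : field N m k) (j : 'I_N) :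
  trp xs c (ord_pred j) = ev c j (xs j).
Proof. by rewrite /trp ord_predK. Qed.

Section EnergyBalance.
Variables (N m k : nat) (xs : nat -> R) (M K A B G : 'M[R]_m).
Variables (S : 'cV[R]_m -> R) (z : R -> field N m k) (t : R).
Hypotheses (skewK : K^T = - K) (symG : G^T = G) (anticomGK : G *m K = - (K *m G)).
Hypotheses (vproj_M : vproj G *m M = 0) (vproj_B : vproj G *m B = 0).
Hypotheses (smoothS : smooth S) (scheme : dg_scheme xs M K A B S z t).

Local Notation c := (z t).
Local Notation P := (vproj G).
Local Notation F := (flux xs K A B z t).

Let dotv_vproj_eq0 (X : 'M[R]_m) u v : P *m X = 0 -> dotv (X *m u) (P *m v) = 0.
Proof.
by move=> PX; rewrite dotv_mulmxr trmx_vproj // mulmxA PX mul0mx dotv0l.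
Qed.

Let cont_halfK j x : continuous (fun x => 2^-1 * dotv (K *m evx c j x) (ev c j x)) x.
Proof.
apply: continuous_mult; first exact: continuous_const.
apply: dotv_continuous; last exact: ev_continuous.
by apply: mulmx_continuous; exact: evx_continuous.
Qed.

Let trace_term (j : 'I_N) (v : 'cV[R]_m) :=
  dotv (F j) (P *m v) - 4^-1 * dotv (K *m G *m v) v.

Lemma cell_weak_form j :
  RInt (fun x => dotv (gradS S (ev c j x)) (P *m ev c j x)) (xs j) (xs j.+1)
  = - RInt (fun x => dotv (K *m ev c j x) (P *m evx c j x)) (xs j) (xs j.+1)
    + dotv (F j) (P *m trm xs c j) - dotv (F (ord_pred j)) (P *m ev c j (xs j)).
Proof.
have := scheme j (mul_field P c); rewrite ev_mul_field evx_mul_field /=.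
by rewrite RInt_eq0 => [|x]; [lra | exact: dotv_vproj_eq0].
Qed.

Lemma cell_volume_term j :
  RInt (fun x => dotv (K *m ev c j x) (P *m evx c j x)) (xs j) (xs j.+1)
  + RInt (fun x => 2^-1 * dotv (K *m evx c j x) (ev c j x)) (xs j) (xs j.+1)
  = 4^-1 * dotv (K *m G *m trm xs c j) (trm xs c j)
    - 4^-1 * dotv (K *m G *m ev c j (xs j)) (ev c j (xs j)).
Proof.
have cont_KP x : continuous (fun x => dotv (K *m ev c j x) (P *m evx c j x)) x.
  apply: dotv_continuous; apply: mulmx_continuous; first exact: ev_continuous.
  exact: evx_continuous.
rewrite -RInt_add_continuous //.
rewrite (RInt_ext _ (fun x => 4^-1 * (dotv (K *m G *m evx c j x) (ev c j x)
                                      + dotv (K *m G *m ev c j x) (evx c j x)))).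
  apply: (RInt_is_derive (g := fun x => 4^-1 * dotv (K *m G *m ev c j x) (ev c j x))) => x.
    apply: continuous_mult; first exact: continuous_const.
    apply: continuous_plus; apply: dotv_continuous; try apply: mulmx_continuous;
      by [exact: ev_continuous | exact: evx_continuous].
  apply: is_derive_scal; apply: dotv_is_derive; last exact: ev_is_derive.
  by apply: mulmx_is_derive; exact: ev_is_derive.
by move=> x _; exact: dotv_K_vproj.
Qed.

Lemma cell_balance j :
  RInt (fun x => S (ev c j x) - 2^-1 * dotv (K *m evx c j x) (ev c j x)) (xs j) (xs j.+1)
  - RInt (fun x => S (ev c j x) - dotv (gradS S (ev c j x)) (P *m ev c j x)) (xs j) (xs j.+1)
  = trace_term j (trm xs c j) - trace_term (ord_pred j) (trp xs c (ord_pred j)).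
Proof.
have cont_S x : continuous (fun x => S (ev c j x)) x.
  by apply: smooth_comp_continuous => //; exact: ev_continuous.
have cont_grad x : continuous (fun x => dotv (gradS S (ev c j x)) (P *m ev c j x)) x.
  apply: dotv_continuous; last by apply: mulmx_continuous; exact: ev_continuous.
  by apply: gradS_comp_continuous => //; exact: ev_continuous.
rewrite !RInt_sub_continuous //.
have := cell_weak_form j; have := cell_volume_term j.
by rewrite /trace_term trp_ord_pred; lra.
Qed.

Lemma energy_balance :
  energy xs K A S c
  = \sum_(j < N) RInt (fun x => S (ev c j x) - dotv (gradS S (ev c j x)) (P *m ev c j x))
                      (xs j) (xs j.+1)
    + jumpterm xs (G *m A) c.
Proof.
have telescope :
    \sum_(j < N) (RInt (fun x => S (ev c j x) - 2^-1 * dotv (K *m evx c j x) (ev c j x))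
                       (xs j) (xs j.+1)
                 - RInt (fun x => S (ev c j x) - dotv (gradS S (ev c j x)) (P *m ev c j x))
                       (xs j) (xs j.+1))
    = \sum_(j < N) (trace_term j (trm xs c j) - trace_term j (trp xs c j)).
  rewrite (eq_bigr _ (fun j _ => cell_balance j)) !big_split /= !sumrN.
  by rewrite [\sum_j trace_term j _](reindex_inj (can_inj (@ord_predK N))).
have interface j :
    trace_term j (trm xs c j) - trace_term j (trp xs c j)
    + 2^-1 * dotv (K *m avg xs c j + A *m jump xs c j) (jump xs c j)
    = 2^-1 * dotv (G *m A *m jump xs c j) (jump xs c j).
  apply: (interface_balance skewK symG anticomGK A (r := B *m jump xs (dtf z t) j)).
  exact: dotv_vproj_eq0.
rewrite /energy /jumpterm !RplusE !RmultE !mulr_sumr -(eq_bigr _ (fun j _ => interface j)).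
by move: telescope; rewrite !big_split /= !sumrN; lra.
Qed.

End EnergyBalance.

Lemma vintegral_vproj N m k xs (Q : 'M[R]_m) (S : 'cV[R]_m -> R) (c : field N m k) :
  Q^T *m Q = 1%:M ->
  vintegral xs Q S c
  = \sum_(j < N) RInt (fun x => S (ev c j x)
        - dotv (gradS S (ev c j x)) (vproj (Q^T *m Dblk m *m Q) *m ev c j x)) (xs j) (xs j.+1).
Proof.
move=> orthoQ; apply: eq_bigr => j _; apply: RInt_ext => x _.
by rewrite vproj_conj // -!mulmxA dotv_mulmxr trmxK dotv_vproj_Dblk.
Qed.

Theorem corollary3p1 (m k N : nat) (xs : nat -> R)
    (M K A B Q : 'M[R]_m) (Lam : 'M[R]_(m./2)) (beta : R)
    (S : 'cV[R]_m -> R) (z : R -> field N m k) (a b : R) :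
  (0 < N)%N ->
  (forall j : nat, (j < N)%N -> xs j < xs j.+1) ->
  M^T = - M -> K^T = - K -> A^T = A ->
  Q^T *m Q = 1%:M ->
  K = Q^T *m Kblk Lam *m Q ->
  B = beta *: M ->
  (forall (i j : 'I_m), (m - m./2 <= j)%N -> (M *m Q^T) i j = 0) ->
  smooth S ->
  (forall t, a < t < b -> C1_at z t) ->
  (forall t, a < t < b -> dg_scheme xs M K A B S z t) ->
  let Atil := Q^T *m Dblk m *m Q *m A in
  (forall t, a < t < b ->
     energy xs K A S (z t) = vintegral xs Q S (z t) + jumpterm xs Atil (z t)) /\
  (forall alpha : R, - 2^-1 <= alpha <= 2^-1 ->
     A = alpha *: (Q^T *m Ablk Lam *m Q) ->
     Atil^T = - Atil /\
     (forall t, a < t < b -> energy xs K A S (z t) = vintegral xs Q S (z t))).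
Proof.
move=> _ _ skewM skewK _ orthoQ defK defB M_v0 smoothS _ scheme Atil.
pose G := Q^T *m Dblk m *m Q.
have symG : G^T = G by rewrite trmx_conj trmx_Dblk.
have anticomGK : G *m K = - (K *m G).
  by rewrite defK !mulmx_conj // Dblk_Kblk Kblk_Dblk mulmxN mulNmx.
have M_vproj : M *m vproj G = 0.
  by rewrite vproj_conj // !mulmxA mulmx_vproj_Dblk // mul0mx.
have vproj_M : vproj G *m M = 0.
  by apply: trmx_inj; rewrite trmx_mul trmx_vproj // skewM mulNmx M_vproj oppr0 trmx0.
have vproj_B : vproj G *m B = 0 by rewrite defB -scalemxAr vproj_M scaler0.
have energy_split t : a < t < b ->
    energy xs K A S (z t) = vintegral xs Q S (z t) + jumpterm xs Atil (z t).
  move=> ht; rewrite vintegral_vproj //.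
  exact: (energy_balance skewK symG anticomGK vproj_M vproj_B smoothS (scheme t ht)).
split => // alpha _ defA.
have skewAtil : Atil^T = - Atil.
  have -> : Atil = - alpha *: K.
    rewrite /Atil defA -scalemxAr mulmx_conj // Dblk_Ablk mulmxN mulNmx -defK.
    by rewrite scalerN scaleNr.
  by rewrite linearZ /= skewK scalerN.
split => // t ht; rewrite energy_split // /jumpterm big1 ?RmultE ?mulr0 ?addr0 // => j _.
exact: dotv_skew.
Qed.
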